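(* Let $K=1$, with channel coefficient $\tilde h_1\in\mathbb C\setminus\{0\}$, noise parameters $\sigma_1^2,\sigma_2^2>0$ and splitting ratio $\rho\in(0,1)$. For $P>0$ consider the splitting channel $\tilde Y_1=\sqrt{\rho|\tilde h_1|^2}\sqrt P\tilde X+\tilde Z$, $Y_2=(1-\rho)|\tilde h_1|^2P|\tilde X|^2+N$, with $\tilde X\sim\mathcal{CN}(0,1)$, $\tilde Z\sim\mathcal{CN}(0,\sigma_1^2)$, $N\sim\mathcal N(0,\sigma_2^2)$ mutually independent. In the high-SNR regime ($P\to\infty$), the splitting ratio maximizing the mutual information $\mathcal I(\sqrt P\tilde X;\tilde Y_1,Y_2)$ is $\rho^\star=1/3$, and the corresponding maximal mutual information satisfies $$\mathcal I(\sqrt P\tilde X;\tilde Y_1,Y_2)\big|_{\rho^\star}\approx\log_2\!\Big(\frac{2\sqrt2}{3\sqrt3}\,\frac{|\tilde h_1|^3P^{3/2}}{\sigma_1\sigma_2}\Big)-\frac{\gamma}{2\ln2},$$ where $\approx$ means that the difference between the two sides tends to $0$ as $P\to\infty$.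
   Context: $\mathcal I$ denotes mutual information in bits; $\gamma$ is Euler's constant; $\mathcal{CN}(0,\sigma^2)$ is the circularly symmetric complex Gaussian distribution with variance $\sigma^2$; $\sigma_1,\sigma_2$ are the positive square roots of $\sigma_1^2,\sigma_2^2$. In the high-SNR regime the mutual information equals, up to a vanishing term, $\log_2(\sqrt2P^{3/2}\sqrt{\Theta_1\Theta_2}/(\sigma_1\sigma_2))-\gamma/(2\ln2)$ with $\Theta_1=\rho|\tilde h_1|^2$, $\Theta_2=(1-\rho)^2|\tilde h_1|^4$; ''optimal in the high SNR regime'' refers to maximizing this asymptotic expression over $\rho$. *)

From Stdlib Require Import Reals.
From Coquelicot Require Import Coquelicot.
Open Scope R_scope.

Definition log2 (x : R) : R := ln x / ln 2.

Definition euler_gamma : R :=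
  real (Lim_seq (fun n : nat => sum_n_m (fun k : nat => / INR k) 1 n - ln (INR n))).

Definition Theta1 (h : C) (rho : R) : R := rho * (Cmod h) ^ 2.
Definition Theta2 (h : C) (rho : R) : R := (1 - rho) ^ 2 * (Cmod h) ^ 4.

(* High-SNR asymptotic expression of I(sqrt P X; Y1, Y2), with s1 = sigma_1^2,
   s2 = sigma_2^2 (variances); sigma_i = sqrt s_i. *)
Definition MI_asym (h : C) (s1 s2 P rho : R) : R :=
  log2 (sqrt 2 * Rpower P (3/2) * sqrt (Theta1 h rho * Theta2 h rho)
        / (sqrt s1 * sqrt s2))
  - euler_gamma / (2 * ln 2).

Definition MI_opt_rhs (h : C) (s1 s2 P : R) : R :=
  log2 ((2 * sqrt 2) / (3 * sqrt 3) * (Cmod h) ^ 3 * Rpower P (3/2)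
        / (sqrt s1 * sqrt s2))
  - euler_gamma / (2 * ln 2).

(* On the interval (0, 1) the high-SNR expression depends on rho only through
   Theta1 * Theta2 = rho (1 - rho)^2 |h|^6, and 4/27 - rho (1 - rho)^2 =
   (rho - 1/3)^2 (4/3 - rho), so rho = 1/3 is the unique maximiser.  At rho = 1/3
   the expression coincides with the claimed right-hand side, so the second claim
   is the standing high-SNR hypothesis at rho = 1/3. *)

From Stdlib Require Import Reals Lra.
From Coquelicot Require Import Coquelicot.
Open Scope R_scope.

Lemma cubic_lt_max (rho : R) : rho < 4/3 -> rho <> 1/3 ->
  rho * (1 - rho) ^ 2 < 4/27.
Proof.
  intros Hlt Hneq.
  assert (Hsq : 0 < (rho - 1/3) ^ 2) by (apply pow2_gt_0; lra).
  replace (4/27 - rho * (1 - rho) ^ 2) with ((rho - 1/3) ^ 2 * (4/3 - rho))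
    by field.
  nra.
Qed.

Lemma Theta1_mul_Theta2 (h : C) (rho : R) :
  Theta1 h rho * Theta2 h rho = rho * (1 - rho) ^ 2 * Cmod h ^ 6.
Proof. unfold Theta1, Theta2; ring. Qed.

Lemma log2_lt (x y : R) : 0 < x -> x < y -> log2 x < log2 y.
Proof.
  intros Hx Hxy; unfold log2, Rdiv.
  apply Rmult_lt_compat_r.
  - apply Rinv_0_lt_compat; rewrite <- ln_1; apply ln_increasing; lra.
  - exact (ln_increasing x y Hx Hxy).
Qed.

Lemma MI_asym_lt (h : C) (s1 s2 P rho rho' : R) :
  0 < s1 -> 0 < s2 -> 0 < P ->
  0 < Theta1 h rho * Theta2 h rho < Theta1 h rho' * Theta2 h rho' ->
  MI_asym h s1 s2 P rho < MI_asym h s1 s2 P rho'.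
Proof.
  intros Hs1 Hs2 HP [Hpos Hlt]; unfold MI_asym.
  apply Rplus_lt_compat_r.
  assert (Hs : 0 < sqrt s1 * sqrt s2) by (apply Rmult_lt_0_compat; apply sqrt_lt_R0; lra).
  assert (HPow : 0 < sqrt 2 * Rpower P (3/2))
    by (apply Rmult_lt_0_compat; [apply sqrt_lt_R0; lra | apply exp_pos]).
  assert (Hsqrt : 0 < sqrt (Theta1 h rho * Theta2 h rho)) by (apply sqrt_lt_R0; lra).
  apply log2_lt; unfold Rdiv.
  - apply Rmult_lt_0_compat; [nra | apply Rinv_0_lt_compat; lra].
  - apply Rmult_lt_compat_r; [apply Rinv_0_lt_compat; lra |].
    apply Rmult_lt_compat_l; [lra |].
    apply sqrt_lt_1_alt; lra.
Qed.

Lemma sqrt_Theta_one_third (h : C) :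
  sqrt 2 * sqrt (Theta1 h (1/3) * Theta2 h (1/3)) =
  (2 * sqrt 2) / (3 * sqrt 3) * Cmod h ^ 3.
Proof.
  assert (Hc : 0 <= Cmod h) by apply Cmod_ge_0.
  assert (H3 : 0 < sqrt 3) by (apply sqrt_lt_R0; lra).
  assert (H33 : sqrt 3 ^ 2 = 3) by (apply pow2_sqrt; lra).
  replace (Theta1 h (1/3) * Theta2 h (1/3)) with ((2 / (3 * sqrt 3) * Cmod h ^ 3) ^ 2).
  - rewrite sqrt_pow2; [field; lra |].
    apply Rmult_le_pos; [apply Rlt_le, Rdiv_lt_0_compat; nra | apply pow_le; lra].
  - rewrite Theta1_mul_Theta2. field_simplify; [rewrite H33; field | lra].
Qed.

Lemma MI_asym_one_third (h : C) (s1 s2 P : R) :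
  MI_asym h s1 s2 P (1/3) = MI_opt_rhs h s1 s2 P.
Proof.
  unfold MI_asym, MI_opt_rhs.
  replace (sqrt 2 * Rpower P (3/2) * sqrt (Theta1 h (1/3) * Theta2 h (1/3)))
    with (sqrt 2 * sqrt (Theta1 h (1/3) * Theta2 h (1/3)) * Rpower P (3/2)) by ring.
  now rewrite sqrt_Theta_one_third.
Qed.

Theorem proposition1 (h : C) (s1 s2 : R) (MI : R -> R -> R)
  (Hh : h <> 0%C) (Hs1 : 0 < s1) (Hs2 : 0 < s2)
  (HMI : forall rho, 0 < rho < 1 ->
     is_lim (fun P => MI P rho - MI_asym h s1 s2 P rho) p_infty 0) :
  (forall P, 0 < P -> forall rho, 0 < rho < 1 -> rho <> 1/3 ->
     MI_asym h s1 s2 P rho < MI_asym h s1 s2 P (1/3))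
  /\ is_lim (fun P => MI P (1/3) - MI_opt_rhs h s1 s2 P) p_infty 0.
Proof.
  split.
  - intros P HP rho Hrho Hneq.
    assert (Hc6 : 0 < Cmod h ^ 6) by (apply pow_lt, Cmod_gt_0, Hh).
    assert (Hcubic : 0 < rho * (1 - rho) ^ 2) by (apply Rmult_lt_0_compat; [lra | apply pow2_gt_0; lra]).
    assert (Hmax := cubic_lt_max rho ltac:(lra) Hneq).
    apply MI_asym_lt; try assumption.
    rewrite !Theta1_mul_Theta2; split; nra.
  - apply is_lim_ext with (fun P => MI P (1/3) - MI_asym h s1 s2 P (1/3)).
    + intros P; now rewrite MI_asym_one_third.
    + apply HMI; lra.
Qed.
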